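(* Let $X_1,\dots,X_n$ be independent random variables, each symmetric about $0$. If $|X_k|\le_{\mathrm{st}}|X_l|$ for some pair $1\le k<l\le n$, then $$|\max(X_i\mid 1\le i\le n,\ i\ne l)|\le_{\mathrm{st}}|\max(X_i\mid 1\le i\le n)|,$$ $$|\min(X_i\mid 1\le i\le n,\ i\ne l)|\le_{\mathrm{st}}|\min(X_i\mid 1\le i\le n)|,$$ and if $|X_k|<_{\mathrm{st}}|X_l|$ both stochastic inequalities are strict. Consequently, if $|X_1|\le_{\mathrm{st}}\cdots\le_{\mathrm{st}}|X_n|$ then $(X_1,\dots,X_n)$ is SIAMX and SIAMN, and if $|X_1|<_{\mathrm{st}}\cdots<_{\mathrm{st}}|X_n|$ then $(X_1,\dots,X_n)$ is SSIAMX and SSIAMN.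
   Context: For random variables $U,V$, $U\le_{\mathrm{st}}V$ means $F_U(x)\ge F_V(x)$ for all real $x$ ($F$ the cdf), and $U<_{\mathrm{st}}V$ means additionally strict inequality for at least one $x$. $(X_1,\dots,X_n)$ is SIAMX if $|\max(X_1,\dots,X_{l-1})|\le_{\mathrm{st}}|\max(X_1,\dots,X_l)|$ for $l=2,\dots,n$ (with $\max(X_1)=X_1$), and SSIAMX if all these inequalities are strict; SIAMN and SSIAMN are the same with $\max$ replaced by $\min$. *)

From HB Require Import structures.
From mathcomp Require Import all_boot all_order all_algebra.
From mathcomp Require Import all_classical all_reals all_analysis.
Set Implicit Arguments. Unset Strict Implicit. Unset Printing Implicit Defensive.
Import Order.TTheory GRing.Theory Num.Theory.
Local Open Scope classical_set_scope.
Local Open Scope ring_scope.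

Section Defs.
Context {d : measure_display} {T : measurableType d} {R : realType}.
Variable P : probability T R.

Definition cdf (U : T -> R) (x : R) : \bar R := P [set w | U w <= x].

Definition st_le (U V : T -> R) : Prop := forall x : R, (cdf V x <= cdf U x)%E.

Definition st_lt (U V : T -> R) : Prop :=
  st_le U V /\ exists x : R, (cdf V x < cdf U x)%E.

Definition rv_abs (U : T -> R) : T -> R := fun w => `|U w|.

Definition symmetric0 (U : T -> R) : Prop :=
  forall B : set R, measurable B ->
    P (U @^-1` B) = P ((fun w => - U w) @^-1` B).

Definition mutual_indep (n : nat) (X : 'I_n -> T -> R) : Prop :=
  forall (J : {set 'I_n}) (B : 'I_n -> set R), (forall i, measurable (B i)) ->
    P (\bigcap_(i in [set i | i \in J]) (X i @^-1` B i))
    = (\prod_(i in J) P (X i @^-1` B i))%E.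

End Defs.

(* maximum / minimum of the values x_i, i in S (S nonempty; 0 if S empty) *)
Definition maxS {R : realType} (n : nat) (S : {set 'I_n}) (x : 'I_n -> R) : R :=
  let s := [seq x i | i <- enum S] in \big[Num.max/head 0 s]_(y <- s) y.
Definition minS {R : realType} (n : nat) (S : {set 'I_n}) (x : 'I_n -> R) : R :=
  let s := [seq x i | i <- enum S] in \big[Num.min/head 0 s]_(y <- s) y.

Definition rv_max {T : Type} {R : realType} (n : nat) (S : {set 'I_n})
  (X : 'I_n -> T -> R) : T -> R := fun w => maxS S (fun i => X i w).
Definition rv_min {T : Type} {R : realType} (n : nat) (S : {set 'I_n})
  (X : 'I_n -> T -> R) : T -> R := fun w => minS S (fun i => X i w).

(* 0-indexed: prefix {0,...,l-1} *)
Definition prefix_set (n l : nat) : {set 'I_n} := [set i : 'I_n | (i < l)%N].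

Section Siam.
Context {d : measure_display} {T : measurableType d} {R : realType}.
Variable P : probability T R.
Variables (n : nat) (X : 'I_n -> T -> R).

(* |max(X_1..X_{l-1})| <=_st |max(X_1..X_l)| for l = 2..n (1-indexed) *)
Definition SIAMX : Prop := forall l : nat, (2 <= l <= n)%N ->
  st_le P (rv_abs (rv_max (prefix_set n l.-1) X)) (rv_abs (rv_max (prefix_set n l) X)).
Definition SSIAMX : Prop := forall l : nat, (2 <= l <= n)%N ->
  st_lt P (rv_abs (rv_max (prefix_set n l.-1) X)) (rv_abs (rv_max (prefix_set n l) X)).
Definition SIAMN : Prop := forall l : nat, (2 <= l <= n)%N ->
  st_le P (rv_abs (rv_min (prefix_set n l.-1) X)) (rv_abs (rv_min (prefix_set n l) X)).
Definition SSIAMN : Prop := forall l : nat, (2 <= l <= n)%N ->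
  st_lt P (rv_abs (rv_min (prefix_set n l.-1) X)) (rv_abs (rv_min (prefix_set n l) X)).
End Siam.

From Pilot Require Import Defs.
From HB Require Import structures.
From mathcomp Require Import all_boot all_order all_algebra.
From mathcomp Require Import all_classical all_reals all_analysis.
From mathcomp Require Import lra zify.
Import Order.TTheory GRing.Theory Num.Theory.
Local Open Scope classical_set_scope.
Local Open Scope ring_scope.

(* For x >= 0, |max_S X| <= x iff every X_i <= x but not every X_i < -x.
   By independence and symmetry, P(|max_S X| <= x) = prod F_i - prod (1 - F_i)
   with F_i = P(X_i <= x) in [1/2, 1]; the same formula holds for |min_S X|,
   since |min_S X| <= x iff every X_i >= -x but not every X_i > x.  In
   particular P(|X_i| <= x) = 2 F_i - 1, so |X_k| <=st |X_l| means F_l <= F_k.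
   Removing l from S changes that difference of products by
   F_k (1 - F_l) a - (1 - F_k) F_l b, where a >= b >= 0 are the products over
   S \ {k, l}; this is nonnegative, and positive when F_l < F_k. *)

Section prod_gap.
Context {R : realFieldType} {I : finType}.

Definition prod_gap (f : I -> R) (S : {set I}) : R :=
  \prod_(i in S) f i - \prod_(i in S) (1 - f i).

Lemma prod_gap_setD1 {f : I -> R} {S : {set I}} {k l : I} :
  (forall i, 2^-1 <= f i <= 1) -> k \in S -> l \in S -> k != l ->
  (f l <= f k -> prod_gap f S <= prod_gap f (S :\ l)) /\
  (f l < f k -> prod_gap f S < prod_gap f (S :\ l)).
Proof.
move=> f_range Sk Sl neq_kl.
have Sk' : k \in S :\ l by rewrite in_setD1 neq_kl Sk.
rewrite /prod_gap !(big_setD1 l Sl) !(big_setD1 k Sk') /=.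
set a := \prod_(i in _) f i; set b := \prod_(i in _) (1 - f i).
have b_ge0 : 0 <= b by apply: prodr_ge0 => i _; have := f_range i; lra.
have b_le_a : b <= a by apply: ler_prod => i _; have := f_range i; lra.
have a_gt0 : 0 < a by apply: prodr_gt0 => i _; have := f_range i; lra.
have := f_range k; have := f_range l; move: (f k) (f l) => fk fl rl rk.
(* Removing l adds fk (1 - fl) a - (1 - fk) fl b
   = a (fk - fl) + (1 - fk) fl (a - b). *)
have gain_ge0 : 0 <= (1 - fk) * fl * (a - b).
  by apply: mulr_ge0; [apply: mulr_ge0|]; lra.
split=> lt_lk.
- have : 0 <= a * (fk - fl) by apply: mulr_ge0; lra.
  nra.
- have : 0 < a * (fk - fl) by apply: mulr_gt0; lra.
  nra.
Qed.

End prod_gap.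

Section extrema_of_family.
Context {R : realType} {n : nat}.
Variables (x : 'I_n -> R) (S : {set 'I_n}).
Hypothesis S_gt0 : (0 < #|S|)%N.

(* [maxS] and [minS] fold from the head of the list of values, which is a
   genuine value x j only because S is nonempty. *)
Let head_extremum : exists2 j, j \in S & head 0 [seq x i | i <- enum S] = x j.
Proof.
have [j Sj] := card_gt0P S_gt0.
have : j \in enum S by rewrite mem_enum.
case E : (enum S) => [//|j0 e] _.
by exists j0 => //; rewrite -mem_enum E mem_head.
Qed.

Lemma maxS_le c : (maxS S x <= c) = [forall i in S, x i <= c].
Proof.
rewrite /maxS; have [j Sj ->] := head_extremum; rewrite big_map big_enum.
by apply/bigmax_leP/forall_inP => [[]//|le_c]; split=> //; apply: le_c.
Qed.

Lemma maxS_lt c : (maxS S x < c) = [forall i in S, x i < c].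
Proof.
rewrite /maxS; have [j Sj ->] := head_extremum; rewrite big_map big_enum.
by apply/bigmax_ltP/forall_inP => [[]//|lt_c]; split=> //; apply: lt_c.
Qed.

Lemma minS_ge c : (c <= minS S x) = [forall i in S, c <= x i].
Proof.
rewrite /minS; have [j Sj ->] := head_extremum; rewrite big_map big_enum.
by apply/bigmin_geP/forall_inP => [[]//|ge_c]; split=> //; apply: ge_c.
Qed.

Lemma minS_gt c : (c < minS S x) = [forall i in S, c < x i].
Proof.
rewrite /minS; have [j Sj ->] := head_extremum; rewrite big_map big_enum.
by apply/bigmin_gtP/forall_inP => [[]//|gt_c]; split=> //; apply: gt_c.
Qed.

Lemma abs_maxS_le c : (`|maxS S x| <= c) =
  [forall i in S, x i <= c] && ~~ [forall i in S, x i < - c].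
Proof. by rewrite ler_norml andbC maxS_le -maxS_lt -leNgt. Qed.

Lemma abs_minS_le c : (`|minS S x| <= c) =
  [forall i in S, - c <= x i] && ~~ [forall i in S, c < x i].
Proof. by rewrite ler_norml minS_ge -minS_gt -leNgt. Qed.

End extrema_of_family.

Section halflines.
Context {R : realType}.

Lemma measurable_set_le (x : R) : measurable [set y | y <= x].
Proof. by rewrite -set_itvNyc; exact: measurable_itv. Qed.

Lemma measurable_set_lt (x : R) : measurable [set y | y < x].
Proof. by rewrite -set_itvNyo; exact: measurable_itv. Qed.

Lemma measurable_set_ge (x : R) : measurable [set y | x <= y].
Proof. by rewrite -set_itvcy; exact: measurable_itv. Qed.

Lemma measurable_set_gt (x : R) : measurable [set y | x < y].
Proof. by rewrite -set_itvoy; exact: measurable_itv. Qed.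

End halflines.

Definition pr {d} {T : measurableType d} {R : realType} (P : probability T R)
  (A : set T) : R := fine (P A).

Definition cdfR {d} {T : measurableType d} {R : realType} (P : probability T R)
  (U : T -> R) (x : R) : R := pr P (U @^-1` [set y | y <= x]).

Section probability.
Context {d : measure_display} {T : measurableType d} {R : realType}.
Context {P : probability T R}.

Lemma prE A : measurable A -> P A = (pr P A)%:E.
Proof.
move=> mA; rewrite /pr fineK // ge0_fin_numE ?measure_ge0 //.
by rewrite (le_lt_trans (probability_le1 _ mA)) // ltry.
Qed.

Lemma pr_ge0 A : 0 <= pr P A.
Proof. by rewrite /pr fine_ge0 // measure_ge0. Qed.

Lemma pr_le1 A : measurable A -> pr P A <= 1.
Proof. by move=> mA; rewrite -lee_fin -prE // probability_le1. Qed.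

Lemma pr_setC A : measurable A -> pr P (~` A) = 1 - pr P A.
Proof.
move=> mA; apply/EFin_inj; rewrite -prE; last exact: measurableC.
by rewrite probability_setC // prE.
Qed.

Lemma pr_setD A B : measurable A -> measurable B -> B `<=` A ->
  pr P (A `\` B) = pr P A - pr P B.
Proof.
move=> mA mB BA; apply/EFin_inj; rewrite -prE; last exact: measurableD.
have PA_fin : (P A < +oo)%E by rewrite prE // ltry.
by rewrite measureD // (setIidr BA) EFinB -(prE _ mA) -(prE _ mB).
Qed.

Lemma cdf_abs_lt0 (U : T -> R) x : x < 0 -> Defs.cdf P (rv_abs U) x = 0%E.
Proof.
move=> x_lt0; rewrite /Defs.cdf (_ : [set w | _] = set0) ?measure0 //.
by apply/seteqP; split=> w //=; rewrite /rv_abs leNgt (lt_le_trans x_lt0).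
Qed.

Section symmetric_variable.
Context {U : T -> R}.
Hypotheses (mU : measurable_fun setT U) (symU : symmetric0 P U).

Lemma measurable_preimage {B : set R} : measurable B -> measurable (U @^-1` B).
Proof. by move=> mB; rewrite -[_ @^-1` _]setTI; apply: mU. Qed.

Lemma cdfR_le1 x : cdfR P U x <= 1.
Proof. by apply: pr_le1; apply: measurable_preimage; apply: measurable_set_le. Qed.

Lemma pr_gt x : pr P (U @^-1` [set y | x < y]) = 1 - cdfR P U x.
Proof.
rewrite /cdfR -pr_setC; last exact: measurable_preimage (measurable_set_le x).
by congr pr; apply/seteqP; split=> w /=; rewrite ltNge => /negP.
Qed.

Lemma pr_geN x : pr P (U @^-1` [set y | - x <= y]) = cdfR P U x.
Proof.
rewrite /pr symU; last exact: measurable_set_ge.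
by congr (fine (P _)); apply/seteqP; split=> w /=; rewrite lerN2.
Qed.

Lemma pr_ltN x : pr P (U @^-1` [set y | y < - x]) = 1 - cdfR P U x.
Proof.
rewrite -pr_gt /pr symU; last exact: measurable_set_lt.
by congr (fine (P _)); apply/seteqP; split=> w /=; rewrite ltrN2.
Qed.

Lemma cdfR_ge_half x : 0 <= x -> 2^-1 <= cdfR P U x.
Proof.
move=> x_ge0; have le_Nx : - x <= x by lra.
have := pr_ge0 (U @^-1` [set y | y <= x] `\` U @^-1` [set y | y < - x]).
rewrite pr_setD ?pr_ltN; first (rewrite /cdfR; lra).
- exact: measurable_preimage (measurable_set_le x).
- exact: measurable_preimage (measurable_set_lt (- x)).
- by move=> w /= /ltW/le_trans; apply.
Qed.

Lemma cdf_abs x : 0 <= x -> Defs.cdf P (rv_abs U) x = (2 * cdfR P U x - 1)%:E.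
Proof.
move=> x_ge0; have le_Nx : - x <= x by lra.
rewrite /Defs.cdf (_ : [set w | _] =
  U @^-1` [set y | y <= x] `\` U @^-1` [set y | y < - x]); last first.
  apply/seteqP; split=> w; rewrite /= /rv_abs ler_norml.
    by case/andP=> ge_Nx le_x; rewrite ltNge ge_Nx.
  by case=> le_x /negP; rewrite -leNgt le_x andbT.
have mle := measurable_preimage (measurable_set_le x).
have mlt := measurable_preimage (measurable_set_lt (- x)).
rewrite prE ?pr_setD ?pr_ltN //; last exact: measurableD.
- by congr (_%:E); rewrite /cdfR; lra.
- by move=> w /= /ltW/le_trans; apply.
Qed.

End symmetric_variable.

End probability.

Section symmetric_family.
Context {d : measure_display} {T : measurableType d} {R : realType}.
Context {P : probability T R} {n : nat} {X : 'I_n -> T -> R}.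
Hypothesis mX : forall i, measurable_fun setT (X i).
Hypothesis indep : mutual_indep P X.
Hypothesis sym : forall i, symmetric0 P (X i).

Definition allX (S : {set 'I_n}) (p : pred R) : set T :=
  [set w | [forall i in S, p (X i w)]].

Lemma allXE S (p : pred R) :
  allX S p = \bigcap_(i in [set i | i \in S]) X i @^-1` [set y | p y].
Proof. by apply/seteqP; split=> w /= => [/forall_inP//|?]; apply/forall_inP. Qed.

Lemma subset_allX S (p q : pred R) : subpred p q -> allX S p `<=` allX S q.
Proof. by move=> pq w /forall_inP Sp; apply/forall_inP => i /Sp /pq. Qed.

Lemma measurable_allX S (p : pred R) :
  measurable [set y | p y] -> measurable (allX S p).
Proof.
move=> mp; rewrite allXE; apply: fin_bigcap_measurable; first exact: finite_finset.
by move=> i _; apply: measurable_preimage.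
Qed.

Lemma pr_allX S (p : pred R) : measurable [set y | p y] ->
  pr P (allX S p) = \prod_(i in S) pr P (X i @^-1` [set y | p y]).
Proof.
move=> mp; apply/EFin_inj; rewrite -prE; last exact: measurable_allX.
rewrite allXE indep // -prodEFin; apply: eq_bigr => i _.
by rewrite -prE //; apply: measurable_preimage.
Qed.

Lemma cdf_abs_rv_max (S : {set 'I_n}) (x : R) : (0 < #|S|)%N -> 0 <= x ->
  Defs.cdf P (rv_abs (rv_max S X)) x = (prod_gap (fun i => cdfR P (X i) x) S)%:E.
Proof.
move=> S_gt0 x_ge0; rewrite /Defs.cdf (_ : [set w | _] =
  allX S (<= x) `\` allX S (< - x)); last first.
  apply/seteqP; split=> w; rewrite /= /rv_abs /rv_max abs_maxS_le //.
    by case/andP=> le_x /negP.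
  by case=> le_x /negP not_lt; apply/andP.
have [mle mlt] := (measurable_set_le x, measurable_set_lt (- x)).
rewrite prE; last by apply: measurableD; apply: measurable_allX.
rewrite pr_setD ?pr_allX //; try exact: measurable_allX; last first.
  by apply: subset_allX => y /= lt_Nx; apply/ltW/(lt_le_trans lt_Nx); lra.
by congr (_ - _)%:E; apply: eq_bigr => i _; exact: pr_ltN (mX i) (sym i) x.
Qed.

Lemma cdf_abs_rv_min (S : {set 'I_n}) (x : R) : (0 < #|S|)%N -> 0 <= x ->
  Defs.cdf P (rv_abs (rv_min S X)) x = (prod_gap (fun i => cdfR P (X i) x) S)%:E.
Proof.
move=> S_gt0 x_ge0; rewrite /Defs.cdf (_ : [set w | _] =
  allX S (>= - x) `\` allX S (> x)); last first.
  apply/seteqP; split=> w; rewrite /= /rv_abs /rv_min abs_minS_le //.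
    by case/andP=> ge_Nx /negP.
  by case=> ge_Nx /negP not_gt; apply/andP.
have [mge mgt] := (measurable_set_ge (- x), measurable_set_gt x).
rewrite prE; last by apply: measurableD; apply: measurable_allX.
rewrite pr_setD ?pr_allX //; try exact: measurable_allX; last first.
  by apply: subset_allX => y /= gt_x; apply/ltW/(le_lt_trans _ gt_x); lra.
congr (_ - _)%:E; apply: eq_bigr => i _.
  exact: pr_geN (sym i) x.
exact: pr_gt (mX i) x.
Qed.

Section removal.
Variable ext : {set 'I_n} -> ('I_n -> T -> R) -> T -> R.
Hypothesis cdf_ext : forall (S : {set 'I_n}) (x : R),
  (0 < #|S|)%N -> 0 <= x ->
  Defs.cdf P (rv_abs (ext S X)) x = (prod_gap (fun i => cdfR P (X i) x) S)%:E.
Variables (S : {set 'I_n}) (k l : 'I_n).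
Hypotheses (Sk : k \in S) (Sl : l \in S) (neq_kl : k != l).

Let S_gt0 : (0 < #|S|)%N. Proof. by apply/card_gt0P; exists l. Qed.

Let Sl_gt0 : (0 < #|S :\ l|)%N.
Proof. by apply/card_gt0P; exists k; rewrite in_setD1 neq_kl. Qed.

Let cdf_absX i x : 0 <= x ->
  Defs.cdf P (rv_abs (X i)) x = (2 * cdfR P (X i) x - 1)%:E.
Proof. exact: cdf_abs (mX i) (sym i) x. Qed.

Let cdfX_range {x : R} : 0 <= x -> forall i, 2^-1 <= cdfR P (X i) x <= 1.
Proof.
move=> x_ge0 i.
by rewrite (cdfR_ge_half (mX i) (sym i) _ x_ge0) (cdfR_le1 (mX i)).
Qed.

Lemma st_le_setD1 : st_le P (rv_abs (X k)) (rv_abs (X l)) ->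
  st_le P (rv_abs (ext (S :\ l) X)) (rv_abs (ext S X)).
Proof.
move=> le_kl x; have [x_lt0|x_ge0] := ltP x 0; first by rewrite !cdf_abs_lt0.
move: (le_kl x); rewrite !cdf_absX ?cdf_ext // !lee_fin => le_2F.
by apply: (proj1 (prod_gap_setD1 (cdfX_range x_ge0) Sk Sl neq_kl)); lra.
Qed.

Lemma st_lt_setD1 : st_lt P (rv_abs (X k)) (rv_abs (X l)) ->
  st_lt P (rv_abs (ext (S :\ l) X)) (rv_abs (ext S X)).
Proof.
case=> le_kl [x lt_kl]; split; first exact: st_le_setD1.
exists x; have [x_lt0|x_ge0] := ltP x 0.
  by move: lt_kl; rewrite !cdf_abs_lt0 ?ltxx.
move: lt_kl; rewrite !cdf_absX ?cdf_ext // !lte_fin => lt_2F.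
by apply: (proj2 (prod_gap_setD1 (cdfX_range x_ge0) Sk Sl neq_kl)); lra.
Qed.

End removal.

Lemma st_le_abs_extrema_setD1 {S : {set 'I_n}} {k l : 'I_n} :
  k \in S -> l \in S -> k != l ->
  st_le P (rv_abs (X k)) (rv_abs (X l)) ->
  st_le P (rv_abs (rv_max (S :\ l) X)) (rv_abs (rv_max S X)) /\
  st_le P (rv_abs (rv_min (S :\ l) X)) (rv_abs (rv_min S X)).
Proof.
move=> Sk Sl neq_kl le_kl; split.
- exact: st_le_setD1 cdf_abs_rv_max _ _ _ Sk Sl neq_kl le_kl.
- exact: st_le_setD1 cdf_abs_rv_min _ _ _ Sk Sl neq_kl le_kl.
Qed.

Lemma st_lt_abs_extrema_setD1 {S : {set 'I_n}} {k l : 'I_n} :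
  k \in S -> l \in S -> k != l ->
  st_lt P (rv_abs (X k)) (rv_abs (X l)) ->
  st_lt P (rv_abs (rv_max (S :\ l) X)) (rv_abs (rv_max S X)) /\
  st_lt P (rv_abs (rv_min (S :\ l) X)) (rv_abs (rv_min S X)).
Proof.
move=> Sk Sl neq_kl lt_kl; split.
- exact: st_lt_setD1 cdf_abs_rv_max _ _ _ Sk Sl neq_kl lt_kl.
- exact: st_lt_setD1 cdf_abs_rv_min _ _ _ Sk Sl neq_kl lt_kl.
Qed.

End symmetric_family.

Lemma prefix_setD1_last n l : (2 <= l <= n)%N -> exists a b : 'I_n,
  [/\ val a = (val b).+1, a \in prefix_set n l, b \in prefix_set n l, b != a &
       prefix_set n l.-1 = prefix_set n l :\ a].
Proof.
move=> /andP[l_ge2 l_le_n].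
have lt_a : (l.-1 < n)%N by lia.
have lt_b : (l.-2 < n)%N by lia.
exists (Ordinal lt_a), (Ordinal lt_b); split; rewrite ?inE -?val_eqE /=; try lia.
by apply/setP => i; rewrite !inE -val_eqE /=; lia.
Qed.

Theorem theorem5p2 (d : measure_display) (T : measurableType d) (R : realType)
  (P : probability T R) (n : nat) (X : 'I_n -> T -> R) :
  (forall i, measurable_fun setT (X i)) ->
  mutual_indep P X ->
  (forall i, symmetric0 P (X i)) ->
  (forall k l : 'I_n, (k < l)%N ->
     st_le P (rv_abs (X k)) (rv_abs (X l)) ->
     st_le P (rv_abs (rv_max [set~ l]%SET X)) (rv_abs (rv_max [set: 'I_n]%SET X)) /\
     st_le P (rv_abs (rv_min [set~ l]%SET X)) (rv_abs (rv_min [set: 'I_n]%SET X))) /\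
  (forall k l : 'I_n, (k < l)%N ->
     st_lt P (rv_abs (X k)) (rv_abs (X l)) ->
     st_lt P (rv_abs (rv_max [set~ l]%SET X)) (rv_abs (rv_max [set: 'I_n]%SET X)) /\
     st_lt P (rv_abs (rv_min [set~ l]%SET X)) (rv_abs (rv_min [set: 'I_n]%SET X))) /\
  ((forall i j : 'I_n, j = i.+1 :> nat -> st_le P (rv_abs (X i)) (rv_abs (X j))) ->
     SIAMX P X /\ SIAMN P X) /\
  ((forall i j : 'I_n, j = i.+1 :> nat -> st_lt P (rv_abs (X i)) (rv_abs (X j))) ->
     SSIAMX P X /\ SSIAMN P X).
Proof.
move=> mX indep sym.
have neq_of_lt (k l : 'I_n) : (k < l)%N -> k != l by rewrite neq_ltn => ->.
have setT_D1 (l : 'I_n) : ([set: 'I_n] :\ l = [set~ l])%SET.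
  by apply/setP => i; rewrite !inE andbT.
split; [|split; [|split]].
- move=> k l /neq_of_lt neq_kl; rewrite -setT_D1.
  exact: (st_le_abs_extrema_setD1 (P := P) mX indep sym
    (finset.in_setT k) (finset.in_setT l) neq_kl).
- move=> k l /neq_of_lt neq_kl; rewrite -setT_D1.
  exact: (st_lt_abs_extrema_setD1 (P := P) mX indep sym
    (finset.in_setT k) (finset.in_setT l) neq_kl).
- move=> le_succ; split=> l /prefix_setD1_last[a [b [ab Sa Sb neq_ba ->]]];
  by have [] := st_le_abs_extrema_setD1 mX indep sym Sb Sa neq_ba (le_succ _ _ ab).
- move=> lt_succ; split=> l /prefix_setD1_last[a [b [ab Sa Sb neq_ba ->]]];
  by have [] := st_lt_abs_extrema_setD1 mX indep sym Sb Sa neq_ba (lt_succ _ _ ab).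
Qed.
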